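(* Let $u_{tm}=0110100110010110\cdots$ be the Thue–Morse word and $a_{tm}=\tfrac12,1,\tfrac34,\tfrac14,\ldots$ the canonical representative of its valid permutation. (i) The valid permutation of the word $0\,u'$, where $u'=1221211221121221\cdots$ is the Thue–Morse word written over the alphabet $\{1,2\}$ (with $1<2$), is ergodic, with canonical representative $0,\tfrac12,1,\tfrac34,\tfrac14,\ldots$ (that is, $0$ followed by $a_{tm}$). (ii) The valid permutation of the word $2\,u_{tm}=20110100110010110\cdots$ is not ergodic.
   Context: For an aperiodic infinite word $u$ over $\{0,\ldots,q-1\}$, the valid permutation $\alpha_u$ is the infinite permutation with $\alpha_u[i]<\alpha_u[j]$ iff the shift $T^iu=u[i]u[i+1]\cdots$ is lexicographically smaller than $T^ju$. An infinite permutation is an equivalence class of real sequences with pairwise distinct elements under $(a[n])\sim(b[n])$ iff $a[i]<a[j]\Leftrightarrow b[i]<b[j]$ for all $i,j$. A real sequence $(a[i])_{i\ge0}$ is canonical if its elements are pairwise distinct, lie in $[0,1]$, and for every $t\in[0,1]$, $\#\{0\le k<n: a[j+k]<t\}/n\to t$ as $n\to\infty$ uniformly in $j$; a permutation is ergodic if it has a canonical representative. The sequence $a_{tm}$ is the fixed point starting with $\tfrac12$ of the morphism $x\mapsto(\tfrac x2+\tfrac14,\tfrac x2+\tfrac34)$ for $0\le x\le\tfrac12$, $x\mapsto(\tfrac x2+\tfrac14,\tfrac x2-\tfrac14)$ for $\tfrac12<x\le1$. *)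

From Stdlib Require Import Reals Lra Lia Arith.
Open Scope R_scope.

Definition word := nat -> nat.
Definition shift (i : nat) (u : word) : word := fun n => u (i + n)%nat.
Definition lex_lt (u v : word) : Prop :=
  exists k : nat, (forall i : nat, (i < k)%nat -> u i = v i) /\ (u k < v k)%nat.

Definition aperiodic (u : word) : Prop :=
  ~ (exists p n0 : nat, (0 < p)%nat /\ forall n, (n0 <= n)%nat -> u (n + p)%nat = u n).

Definition pairwise_distinct (a : nat -> R) : Prop :=
  forall i j : nat, i <> j -> a i <> a j.
Definition represents_valid (u : word) (a : nat -> R) : Prop :=
  pairwise_distinct a /\
  forall i j : nat, a i < a j <-> lex_lt (shift i u) (shift j u).

Fixpoint count_below (a : nat -> R) (j n : nat) (t : R) : nat :=
  match n with
  | O => O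
  | S m => (count_below a j m t + if Rlt_dec (a (j + m)%nat) t then 1 else 0)%nat
  end.

Definition canonical (a : nat -> R) : Prop :=
  pairwise_distinct a /\
  (forall i, 0 <= a i <= 1) /\
  forall t, 0 <= t <= 1 ->
    forall eps, eps > 0 -> exists N : nat, forall n j : nat, (N <= n)%nat -> (0 < n)%nat ->
      Rabs (INR (count_below a j n t) / INR n - t) < eps.

Definition ergodic_valid (u : word) : Prop :=
  exists a, represents_valid u a /\ canonical a.

Fixpoint popcount_fuel (fuel n : nat) : nat :=
  match fuel with
  | O => O
  | S f => match n with
           | O => O
           | _ => ((if Nat.odd n then 1 else 0) + popcount_fuel f (Nat.div2 n))%nat
           end
  end.
Definition u_tm : word := fun n => if Nat.even (popcount_fuel n n) then 0%nat else 1%nat.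

(** a_tm: fixed point starting with 1/2 of the morphism
    x |-> (x/2+1/4, x/2+3/4) if x <= 1/2, x |-> (x/2+1/4, x/2-1/4) if x > 1/2,
    i.e. a(0)=1/2, a(2n) = first image letter of a(n), a(2n+1) = second one. *)
Fixpoint a_tm_fuel (fuel n : nat) : R :=
  match fuel with
  | O => 1/2
  | S f => match n with
           | O => 1/2
           | _ => let x := a_tm_fuel f (Nat.div2 n) in
                  if Nat.even n then x/2 + 1/4
                  else if Rle_dec x (1/2) then x/2 + 3/4 else x/2 - 1/4
           end
  end.
Definition a_tm (n : nat) : R := a_tm_fuel n n.

Definition word_0u' : word := fun n => match n with O => 0%nat | S m => (u_tm m + 1)%nat end.
Definition word_2utm : word := fun n => match n with O => 2%nat | S m => u_tm m end.
Definition zero_a_tm (n : nat) : R := match n with O => 0 | S m => a_tm m end.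

(* The Thue-Morse word satisfies u(2n) = u(n), u(2n+1) = 1 - u(n), and a_tm follows the same
   recursion: a(2n) = a(n)/2 + 1/4, while a(2n+1) = a(n)/2 + 3/4 or a(n)/2 - 1/4 according as
   u(n) = 0 or 1.  Comparing the first few letters of the shifts and inducting on i + j gives
   a(i) < a(j) iff T^i u < T^j u; prepending 0 to a_tm and to u' = u + 1 keeps this order.
   By the same recursion the values of a_tm on an aligned block of length M = 2^(k+1) are a
   permutation of a grid z + m/M with 0 < z <= 1/M, so every block meets [0, t) in M t + O(1)
   points and every window of length n in n t + O(n/M + M) points: the frequencies converge
   uniformly.  For 2 u_tm, a representative b has b(0) largest and, since T u_tm is the
   largest shift of u_tm (a(1) = 1), b(2) > b(j) for all j >= 3; so the windows starting at 3
   stay below b(2) < 1 and have frequency 1 at level (b(2) + 1) / 2. *)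

From Stdlib Require Import Reals Lra Lia Arith List Permutation.

Local Open Scope nat_scope.

Lemma popcount_fuel_enough f g n :
  n <= f -> n <= g -> popcount_fuel f n = popcount_fuel g n.
Proof.
  revert g n; induction f as [|f IH]; intros g [|n] Hf Hg; try lia;
    destruct g as [|g]; try lia; try reflexivity.
  cbn [popcount_fuel]; f_equal; apply IH; pose proof (Nat.lt_div2 (S n)); lia.
Qed.

Lemma a_tm_fuel_enough f g n :
  n <= f -> n <= g -> a_tm_fuel f n = a_tm_fuel g n.
Proof.
  revert g n; induction f as [|f IH]; intros g [|n] Hf Hg; try lia;
    destruct g as [|g]; try lia; try reflexivity.
  cbn [a_tm_fuel]; rewrite (IH g); [reflexivity | |];
    pose proof (Nat.lt_div2 (S n)); lia.
Qed.

Lemma popcount_step n : 0 < n ->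
  popcount_fuel n n = (if Nat.odd n then 1 else 0) + popcount_fuel (Nat.div2 n) (Nat.div2 n).
Proof.
  destruct n as [|n]; [lia|]; intros _.
  change (popcount_fuel (S n) (S n))
    with ((if Nat.odd (S n) then 1 else 0) + popcount_fuel n (Nat.div2 (S n))).
  f_equal; apply popcount_fuel_enough; pose proof (Nat.lt_div2 (S n)); lia.
Qed.

Lemma u_tm_double n : u_tm (2 * n) = u_tm n.
Proof.
  destruct n as [|n]; [reflexivity|]; unfold u_tm.
  rewrite popcount_step, Nat.odd_mul, Nat.div2_double by lia; reflexivity.
Qed.

Lemma u_tm_succ_double n : u_tm (2 * n + 1) = 1 - u_tm n.
Proof.
  unfold u_tm; rewrite popcount_step by lia.
  replace (2 * n + 1) with (S (2 * n)) by lia.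
  rewrite Nat.odd_succ, Nat.even_mul, Nat.div2_succ_double.
  rewrite Nat.even_add; now destruct (Nat.even (popcount_fuel n n)).
Qed.

Lemma u_tm_le1 n : u_tm n <= 1.
Proof. unfold u_tm; destruct (Nat.even _); lia. Qed.

Local Open Scope R_scope.

Definition tm_fst (x : R) : R := x / 2 + 1 / 4.
Definition tm_snd (x : R) : R := if Rle_dec x (1 / 2) then x / 2 + 3 / 4 else x / 2 - 1 / 4.

Lemma a_tm_step n : (0 < n)%nat ->
  a_tm n = if Nat.even n then tm_fst (a_tm (Nat.div2 n)) else tm_snd (a_tm (Nat.div2 n)).
Proof.
  destruct n as [|n]; [lia|]; intros _; unfold a_tm.
  change (a_tm_fuel (S n) (S n))
    with (let x := a_tm_fuel n (Nat.div2 (S n)) in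
          if Nat.even (S n) then x / 2 + 1 / 4
          else if Rle_dec x (1 / 2) then x / 2 + 3 / 4 else x / 2 - 1 / 4).
  rewrite (a_tm_fuel_enough n (Nat.div2 (S n))) by (pose proof (Nat.lt_div2 (S n)); lia).
  reflexivity.
Qed.

Lemma a_tm_double n : a_tm (2 * n) = tm_fst (a_tm n).
Proof.
  destruct n as [|n].
  - unfold tm_fst; cbn; lra.
  - rewrite a_tm_step, Nat.even_mul, Nat.div2_double by lia; reflexivity.
Qed.

Lemma a_tm_succ_double n : a_tm (2 * n + 1) = tm_snd (a_tm n).
Proof.
  rewrite a_tm_step by lia; replace (2 * n + 1)%nat with (S (2 * n)) by lia.
  now rewrite Nat.even_succ, Nat.odd_mul, Nat.div2_succ_double.
Qed.

Lemma a_tm_bounds n : 0 < a_tm n <= 1 /\ (a_tm n <= 1 / 2 <-> u_tm n = 0%nat).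
Proof.
  induction n as [n IH] using lt_wf_ind.
  destruct (Nat.Even_or_Odd n) as [[m ->]|[m ->]].
  - destruct m as [|m]; [cbn; split; [lra|]; split; [reflexivity|lra]|].
    rewrite a_tm_double, u_tm_double; unfold tm_fst.
    destruct (IH (S m)) as [Hrange Hhalf]; [lia|].
    split; [lra|]; rewrite <- Hhalf; lra.
  - rewrite a_tm_succ_double, u_tm_succ_double; unfold tm_snd.
    destruct (IH m) as [Hrange Hhalf]; [lia|]; pose proof (u_tm_le1 m).
    destruct (Rle_dec (a_tm m) (1 / 2)) as [Hle|Hgt].
    + rewrite (proj1 Hhalf Hle); split; [lra|]; split; [lra|discriminate].
    + assert (u_tm m <> 0%nat) by (intros E; apply Hhalf in E; lra).
      replace (1 - u_tm m)%nat with 0%nat by lia; split; [lra|]; split; [reflexivity|lra].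
Qed.

Lemma a_tm_succ_double_cases n :
  (u_tm n = 0%nat /\ a_tm (2 * n + 1) = a_tm n / 2 + 3 / 4) \/
  (u_tm n = 1%nat /\ a_tm (2 * n + 1) = a_tm n / 2 - 1 / 4).
Proof.
  rewrite a_tm_succ_double; unfold tm_snd.
  destruct (a_tm_bounds n) as [_ Hhalf]; pose proof (u_tm_le1 n).
  destruct (Rle_dec (a_tm n) (1 / 2)) as [Hle|Hgt].
  - left; split; [now apply Hhalf | reflexivity].
  - right; split; [|reflexivity].
    assert (u_tm n <> 0%nat) by (intros E; apply Hhalf in E; lra); lia.
Qed.

Local Open Scope nat_scope.

Lemma lex_lt_irrefl u : ~ lex_lt u u.
Proof. intros [k [_ Hk]]; lia. Qed.

Lemma lex_lt_asym u v : lex_lt u v -> ~ lex_lt v u.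
Proof.
  intros [k [Hu Hk]] [l [Hv Hl]].
  destruct (Nat.lt_trichotomy k l) as [H|[->|H]];
    [specialize (Hv k H) | | specialize (Hu l H)]; lia.
Qed.

Lemma lex_lt_head u v : u 0 < v 0 -> lex_lt u v.
Proof. intros H; exists 0; split; [lia | exact H]. Qed.

Lemma lex_lt_add_letters c u v :
  lex_lt (fun i => u i + c) (fun i => v i + c) <-> lex_lt u v.
Proof.
  split; intros [k [Heq Hk]]; exists k; split; try lia;
    intros i Hi; specialize (Heq i Hi); lia.
Qed.

Lemma lex_lt_complement u v : (forall i, u i <= 1) -> (forall i, v i <= 1) ->
  lex_lt (fun i => 1 - u i) (fun i => 1 - v i) -> lex_lt v u.
Proof.
  intros Hu Hv [k [Heq Hk]]; exists k; split;
    [intros i Hi; specialize (Heq i Hi); specialize (Hu i); specialize (Hv i) |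
     specialize (Hu k); specialize (Hv k)]; lia.
Qed.

Section ThueMorseLikeShifts.

Variable w : word.
Hypothesis w_double : forall n, w (2 * n) = w n.
Hypothesis w_succ_double : forall n, w (2 * n + 1) = 1 - w n.
Hypothesis w_le1 : forall n, w n <= 1.

Lemma w_double_add m i :
  w (2 * m + i) = if Nat.even i then w (m + Nat.div2 i) else 1 - w (m + Nat.div2 i).
Proof.
  destruct (Nat.Even_or_Odd i) as [[p ->]|[p ->]].
  - rewrite Nat.even_mul, Nat.div2_double; cbn [Nat.even orb].
    rewrite <- (w_double (m + p)); f_equal; lia.
  - replace (2 * p + 1) with (S (2 * p)) by lia.
    rewrite Nat.even_succ, Nat.odd_mul, Nat.div2_succ_double; cbn [Nat.odd Nat.even negb andb].
    rewrite <- (w_succ_double (m + p)); f_equal; lia.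
Qed.

Lemma w_no_cube n : w n = w (n + 1) -> w (n + 2) = 1 - w (n + 1).
Proof.
  destruct (Nat.Even_or_Odd n) as [[p ->]|[p ->]]; intros Heq.
  - rewrite w_double, w_succ_double in Heq; pose proof (w_le1 p); lia.
  - replace (2 * p + 1 + 2) with (2 * (p + 1) + 1) by lia;
    replace (2 * p + 1 + 1) with (2 * (p + 1)) by lia.
    now rewrite w_succ_double, w_double.
Qed.

Lemma lex_shift_double m n :
  lex_lt (shift m w) (shift n w) -> lex_lt (shift (2 * m) w) (shift (2 * n) w).
Proof.
  intros [k [Heq Hk]]; exists (2 * k); unfold shift in *; split.
  - intros i Hi; rewrite !w_double_add, Heq; [reflexivity|].
    pose proof (Nat.div2_odd i); destruct (Nat.odd i); lia.
  - now rewrite !w_double_add, Nat.even_mul, Nat.div2_double.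
Qed.

Lemma lex_shift_succ_double m n : w m = w n ->
  lex_lt (shift m w) (shift n w) -> lex_lt (shift (2 * m + 1) w) (shift (2 * n + 1) w).
Proof.
  intros Hmn [[|k] [Heq Hk]]; unfold shift in *; [rewrite !Nat.add_0_r in Hk; lia|].
  assert (Hodd : forall p i, w (2 * p + 1 + i) = w (2 * p + S i)) by (intros; f_equal; lia).
  exists (2 * k + 1); split.
  - intros i Hi; rewrite !Hodd, !w_double_add, Heq; [reflexivity|].
    pose proof (Nat.div2_odd (S i)); destruct (Nat.odd (S i)); lia.
  - rewrite !Hodd; replace (S (2 * k + 1)) with (2 * S k) by lia.
    now rewrite !w_double_add, Nat.even_mul, Nat.div2_double.
Qed.

Lemma lex_shift_double_lt_succ_double m n : w n = 0 ->
  lex_lt (shift (2 * m) w) (shift (2 * n + 1) w).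
Proof.
  intros Hn.
  assert (U : shift (2 * m) w 0 = w m /\ shift (2 * m) w 1 = 1 - w m /\
              shift (2 * m) w 2 = w (m + 1) /\ shift (2 * m) w 3 = 1 - w (m + 1)).
  { unfold shift; rewrite !w_double_add; cbn [Nat.even Nat.div2]; now rewrite Nat.add_0_r. }
  assert (V : shift (2 * n + 1) w 0 = 1 - w n /\ shift (2 * n + 1) w 1 = w (n + 1) /\
              shift (2 * n + 1) w 2 = 1 - w (n + 1) /\ shift (2 * n + 1) w 3 = w (n + 2)).
  { unfold shift; rewrite <- !Nat.add_assoc; cbn [Nat.add].
    rewrite !w_double_add; cbn [Nat.even Nat.div2]; now rewrite Nat.add_0_r. }
  destruct U as (U0 & U1 & U2 & U3), V as (V0 & V1 & V2 & V3).
  pose proof (w_le1 m); pose proof (w_le1 (m + 1)); pose proof (w_le1 (n + 1)).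
  pose proof (w_no_cube n).
  destruct (Nat.eq_dec (w m) 0); [exists 0 |
    destruct (Nat.eq_dec (w (n + 1)) 1); [exists 1 |
      destruct (Nat.eq_dec (w (m + 1)) 0); [exists 2 | exists 3]]];
    (split; [intros [|[|[|i]]] Hi|]); lia.
Qed.

End ThueMorseLikeShifts.

Local Open Scope R_scope.

Definition grid (z : R) (M : nat) : list R := map (fun m => z + INR m / INR M) (seq 0 M).

Lemma map_seq_offset {A : Type} (f : nat -> A) s n :
  map f (seq s n) = map (fun i => f (s + i)%nat) (seq 0 n).
Proof.
  revert f s; induction n as [|n IH]; intros f s; [reflexivity|].
  cbn [seq map]; rewrite Nat.add_0_r, IH, (IH _ 1%nat); f_equal.
  apply map_ext; intros i; f_equal; lia.
Qed.

Lemma a_tm_map_seq_double s n :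
  map a_tm (seq (2 * s) (2 * n)) =
  flat_map (fun x => tm_fst x :: tm_snd x :: nil) (map a_tm (seq s n)).
Proof.
  revert s; induction n as [|n IH]; intros s; [reflexivity|].
  replace (2 * S n)%nat with (S (S (2 * n))) by lia; cbn [seq map flat_map app].
  replace (S (S (2 * s))) with (2 * S s)%nat by lia; rewrite IH.
  replace (S (2 * s)) with (2 * s + 1)%nat by lia.
  now rewrite a_tm_double, a_tm_succ_double.
Qed.

Lemma Permutation_flat_map_pair {A B : Type} (f g : A -> B) l :
  Permutation (flat_map (fun x => f x :: g x :: nil) l) (map f l ++ map g l).
Proof.
  induction l as [|x l IH]; cbn; [constructor|].
  constructor; eapply perm_trans; [apply perm_skip, IH | apply Permutation_middle].
Qed.

Lemma map_tm_fst_grid z H : (0 < H)%nat ->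
  map tm_fst (grid z (2 * H)) = map (fun m => z / 2 + INR m / INR (4 * H)) (seq H (2 * H)).
Proof.
  intros HH; assert (HHR : 0 < INR H) by (apply lt_0_INR; lia).
  unfold grid; rewrite map_map, (map_seq_offset _ H).
  apply map_ext; intros i; unfold tm_fst.
  rewrite plus_INR, !mult_INR; cbn [INR]; field; lra.
Qed.

Lemma map_tm_snd_grid z H : (0 < H)%nat -> 0 < z <= 1 / INR (2 * H) ->
  map tm_snd (grid z (2 * H)) =
  map (fun m => z / 2 + INR m / INR (4 * H)) (seq (3 * H) H) ++
  map (fun m => z / 2 + INR m / INR (4 * H)) (seq 0 H).
Proof.
  intros HH [Hz0 Hz1]; assert (HHR : 0 < INR H) by (apply lt_0_INR; lia).
  assert (HzH : z * INR H <= 1 / 2).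
  { apply (Rmult_le_compat_r (INR H)) in Hz1; [|lra].
    now replace (1 / INR (2 * H) * INR H) with (1 / 2) in Hz1
      by (rewrite mult_INR; cbn [INR]; field; lra). }
  unfold grid; replace (seq 0 (2 * H)) with (seq 0 H ++ seq H H)
    by (rewrite <- seq_app; f_equal; lia).
  rewrite map_map, map_app, (map_seq_offset _ (3 * H)), (map_seq_offset _ H); f_equal;
    apply map_ext_in; intros i Hi; apply in_seq in Hi; unfold tm_snd;
    assert (Hi' : INR i + 1 <= INR H) by (rewrite <- S_INR; apply le_INR; lia);
    pose proof (pos_INR i); rewrite ?plus_INR, !mult_INR; cbn [INR].
  - destruct Rle_dec as [_|Hgt]; [field; lra|].
    exfalso; apply Hgt, (Rmult_le_reg_r (INR H)); [lra|].
    replace ((z + INR i / ((1 + 1) * INR H)) * INR H) with (z * INR H + INR i / 2)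
      by (field; lra); lra.
  - destruct Rle_dec as [Hle|_]; [|field; lra].
    apply (Rmult_le_compat_r (INR H)) in Hle; [|lra].
    replace ((z + (INR H + INR i) / ((1 + 1) * INR H)) * INR H)
      with (z * INR H + (INR H + INR i) / 2) in Hle by (field; lra).
    pose proof (Rmult_lt_0_compat _ _ Hz0 HHR); lra.
Qed.

(* [tm_fst] maps the grid onto the middle half of the finer grid, [tm_snd] onto its two
   outer quarters. *)
Lemma grid_double z H : (0 < H)%nat -> 0 < z <= 1 / INR (2 * H) ->
  Permutation (map tm_fst (grid z (2 * H)) ++ map tm_snd (grid z (2 * H)))
              (grid (z / 2) (4 * H)).
Proof.
  intros HH Hz; rewrite map_tm_fst_grid, map_tm_snd_grid by assumption.
  set (g m := z / 2 + INR m / INR (4 * H)).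
  assert (Hgrid : grid (z / 2) (4 * H) =
                  map g (seq 0 H) ++ map g (seq H (2 * H)) ++ map g (seq (3 * H) H)).
  { unfold grid; rewrite <- !map_app; f_equal.
    replace (3 * H)%nat with (H + 2 * H)%nat by lia.
    rewrite <- !seq_app; f_equal; lia. }
  rewrite Hgrid, app_assoc.
  apply (Permutation_app_comm (_ ++ _) (map g (seq 0 H))).
Qed.

Lemma a_tm_block_grid k q : exists z, 0 < z <= 1 / INR (2 ^ S k) /\
  Permutation (map a_tm (seq (2 ^ S k * q) (2 ^ S k))) (grid z (2 ^ S k)).
Proof.
  induction k as [|k IH].
  - replace (seq (2 ^ 1 * q) (2 ^ 1)) with (seq (2 * q) (2 * 1)) by reflexivity.
    rewrite a_tm_map_seq_double; cbn [seq map flat_map app].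
    destruct (a_tm_bounds q) as [[Hpos Hle1] _].
    unfold grid, tm_fst, tm_snd; cbn [seq map INR Nat.pow Nat.mul Nat.add].
    destruct Rle_dec.
    + exists (a_tm q / 2 + 1 / 4); split; [lra|].
      apply Permutation_refl'; f_equal; [|f_equal]; field.
    + exists (a_tm q / 2 - 1 / 4); split; [lra|].
      eapply perm_trans; [apply perm_swap|].
      apply Permutation_refl'; f_equal; [|f_equal]; field.
  - destruct IH as [z [Hz Hperm]].
    exists (z / 2); split.
    + assert (HM : 0 < INR (2 ^ S k)) by (apply lt_0_INR, Nat.neq_0_lt_0, Nat.pow_nonzero; lia).
      change (2 ^ S (S k))%nat with (2 * 2 ^ S k)%nat.
      replace (1 / INR (2 * 2 ^ S k)) with (1 / INR (2 ^ S k) / 2)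
        by (rewrite mult_INR; cbn [INR]; field; lra); lra.
    + replace (2 ^ S (S k) * q)%nat with (2 * (2 ^ S k * q))%nat by (cbn; lia).
      change (2 ^ S (S k))%nat with (2 * 2 ^ S k)%nat at 1.
      rewrite a_tm_map_seq_double.
      eapply perm_trans; [apply Permutation_flat_map_pair|].
      eapply perm_trans; [apply Permutation_app; apply Permutation_map, Hperm|].
      replace (2 ^ S (S k))%nat with (4 * 2 ^ k)%nat by (cbn; lia).
      apply grid_double; [pose proof (Nat.pow_nonzero 2 k); lia | exact Hz].
Qed.

Lemma NoDup_map_inj_in {A B : Type} (f : A -> B) l x y :
  NoDup (map f l) -> In x l -> In y l -> f x = f y -> x = y.
Proof.
  induction l as [|a l IH]; cbn; [tauto|].
  intros Hnd Hx Hy Hxy; inversion_clear Hnd as [|? ? Hnotin Hnd'].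
  destruct Hx as [<-|Hx], Hy as [<-|Hy]; auto;
    exfalso; apply Hnotin; [rewrite Hxy | rewrite <- Hxy]; now apply in_map.
Qed.

Lemma grid_NoDup z M : NoDup (grid z M).
Proof.
  apply FinFun.Injective_map_NoDup_in; [|apply seq_NoDup].
  intros x y Hx _ Hxy; apply in_seq in Hx.
  assert (HM : 0 < INR M) by (apply lt_0_INR; lia).
  apply INR_eq; apply (Rmult_eq_reg_r (/ INR M)); [lra | apply Rinv_neq_0_compat; lra].
Qed.

Lemma a_tm_injective i j : a_tm i = a_tm j -> i = j.
Proof.
  intros Hij; set (k := (i + j)%nat).
  destruct (a_tm_block_grid k 0) as [z [_ Hperm]]; rewrite Nat.mul_0_r in Hperm.
  assert (Hk : (S k < 2 ^ S k)%nat) by (apply Nat.pow_gt_lin_r; lia).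
  apply (NoDup_map_inj_in a_tm (seq 0 (2 ^ S k))); auto.
  - exact (Permutation_NoDup (Permutation_sym Hperm) (grid_NoDup z _)).
  - apply in_seq; lia.
  - apply in_seq; lia.
Qed.

(* The even/odd case of the complementary word [1 - u_tm], whose order is reversed. *)
Lemma lex_shift_u_tm_succ_double_lt_double m n : u_tm n = 1%nat ->
  lex_lt (shift (2 * n + 1) u_tm) (shift (2 * m) u_tm).
Proof.
  intros Hn; apply lex_lt_complement; [intros; apply u_tm_le1 .. |].
  apply (lex_shift_double_lt_succ_double (fun k => 1 - u_tm k)%nat).
  - intros k; now rewrite u_tm_double.
  - intros k; now rewrite u_tm_succ_double.
  - intros k; lia.
  - lia.
Qed.

Lemma lex_shift_of_a_tm_lt i j :
  a_tm i < a_tm j -> lex_lt (shift i u_tm) (shift j u_tm).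
Proof.
  remember (i + j)%nat as s eqn:Hs; revert i j Hs.
  induction s as [s IH] using lt_wf_ind; intros i j -> Hlt.
  destruct (Nat.Even_or_Odd i) as [[m ->]|[m ->]], (Nat.Even_or_Odd j) as [[n ->]|[n ->]].
  - rewrite !a_tm_double in Hlt; unfold tm_fst in Hlt.
    apply lex_shift_double; [exact u_tm_double | exact u_tm_succ_double |].
    assert (Hmn : (m + n <> 0)%nat)
      by (intros E; assert (m = 0%nat /\ n = 0%nat) as [-> ->] by lia; lra).
    apply (IH (m + n)%nat); [lia | reflexivity | lra].
  - destruct (a_tm_bounds m) as [[? ?] _], (a_tm_bounds n) as [[? ?] _].
    rewrite a_tm_double in Hlt; unfold tm_fst in Hlt.
    destruct (a_tm_succ_double_cases n) as [[Hu _]|[_ E]]; [|lra].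
    apply lex_shift_double_lt_succ_double; auto using u_tm_double, u_tm_succ_double, u_tm_le1.
  - destruct (a_tm_bounds m) as [[? ?] _], (a_tm_bounds n) as [[? ?] _].
    rewrite a_tm_double in Hlt; unfold tm_fst in Hlt.
    destruct (a_tm_succ_double_cases m) as [[_ E]|[Hu _]]; [lra|].
    now apply lex_shift_u_tm_succ_double_lt_double.
  - destruct (a_tm_bounds m) as [[? ?] _], (a_tm_bounds n) as [[? ?] _].
    destruct (a_tm_succ_double_cases m) as [[Hm Em]|[Hm Em]],
      (a_tm_succ_double_cases n) as [[Hn En]|[Hn En]]; rewrite Em, En in Hlt.
    1, 4: apply lex_shift_succ_double; [exact u_tm_double | exact u_tm_succ_double | congruence |];
          apply (IH (m + n)%nat); [lia | reflexivity | lra].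
    + lra.
    + apply lex_lt_head; unfold shift; rewrite !Nat.add_0_r, !u_tm_succ_double; lia.
Qed.

Lemma a_tm_lt_iff_lex i j : a_tm i < a_tm j <-> lex_lt (shift i u_tm) (shift j u_tm).
Proof.
  split; [apply lex_shift_of_a_tm_lt|]; intros Hlex.
  destruct (Rtotal_order (a_tm i) (a_tm j)) as [Hlt|[Heq|Hgt]]; auto; exfalso.
  - apply a_tm_injective in Heq; subst; exact (lex_lt_irrefl _ Hlex).
  - exact (lex_lt_asym _ _ Hlex (lex_shift_of_a_tm_lt _ _ Hgt)).
Qed.

Lemma zero_a_tm_pairwise_distinct : pairwise_distinct zero_a_tm.
Proof.
  intros [|i] [|j] Hij; cbn; try lia.
  - pose proof (proj1 (proj1 (a_tm_bounds j))); lra.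
  - pose proof (proj1 (proj1 (a_tm_bounds i))); lra.
  - intros E; apply a_tm_injective in E; lia.
Qed.

Lemma zero_a_tm_represents : represents_valid word_0u' zero_a_tm.
Proof.
  split; [exact zero_a_tm_pairwise_distinct|].
  assert (Hhead : forall j, lex_lt (shift 0 word_0u') (shift (S j) word_0u'))
    by (intros j; apply lex_lt_head; cbn; lia).
  intros [|i] [|j]; cbn [zero_a_tm].
  - split; [lra | intros Hlex; exfalso; exact (lex_lt_irrefl _ Hlex)].
  - split; [intros _; apply Hhead | intros _; apply a_tm_bounds].
  - pose proof (proj1 (proj1 (a_tm_bounds i))).
    split; [lra | intros Hlex; exfalso; exact (lex_lt_asym _ _ Hlex (Hhead i))].
  - rewrite a_tm_lt_iff_lex, <- (lex_lt_add_letters 1); reflexivity.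
Qed.

Definition count_lt (t : R) (l : list R) : nat :=
  length (filter (fun x => if Rlt_dec x t then true else false) l).

Lemma Permutation_count_lt t l l' : Permutation l l' -> count_lt t l = count_lt t l'.
Proof.
  unfold count_lt; induction 1; cbn; repeat destruct Rlt_dec; cbn; lia.
Qed.

Lemma count_below_map b j n t : count_below b j n t = count_lt t (map b (seq j n)).
Proof.
  induction n as [|n IH]; [reflexivity|].
  cbn [count_below]; rewrite IH, seq_S, map_app; unfold count_lt.
  rewrite filter_app, length_app; cbn; now destruct Rlt_dec.
Qed.

Lemma count_lt_INR_seq x n c : c = count_lt x (map INR (seq 0 n)) ->
  (c = n \/ x <= INR c) /\ (c = 0%nat \/ INR c < x + 1).
Proof.
  revert c; induction n as [|n IH]; intros c ->; [cbn; auto|].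
  assert (Hle : (count_lt x (map INR (seq 0 n)) <= n)%nat).
  { unfold count_lt; eapply Nat.le_trans; [apply filter_length_le|].
    now rewrite length_map, length_seq. }
  destruct (IH _ eq_refl) as [IH1 IH2].
  rewrite seq_S, map_app; unfold count_lt in *; rewrite filter_app, length_app; cbn.
  set (c := length _) in *; apply le_INR in Hle.
  destruct Rlt_dec as [Hlt|Hge]; cbn [length]; rewrite ?plus_INR; cbn [INR].
  - split; [destruct IH1; [left; lia | right; lra] | right; lra].
  - rewrite Nat.add_0_r, Rplus_0_r; split; [right; destruct IH1 as [->|]; lra | exact IH2].
Qed.

Lemma count_lt_grid_eq z M t : (0 < M)%nat ->
  count_lt t (grid z M) = count_lt ((t - z) * INR M) (map INR (seq 0 M)).
Proof.
  intros HM; assert (HMR : 0 < INR M) by (apply lt_0_INR; lia).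
  unfold count_lt, grid; rewrite !filter_map_swap, !length_map; f_equal.
  apply filter_ext; intros m.
  destruct (Rlt_dec (z + INR m / INR M) t) as [Hlt|Hge],
    (Rlt_dec (INR m) ((t - z) * INR M)) as [Hlt'|Hge']; auto; exfalso.
  - apply Hge'; apply (Rmult_lt_compat_r (INR M)) in Hlt; [|lra].
    replace ((z + INR m / INR M) * INR M) with (z * INR M + INR m) in Hlt
      by (field; lra); lra.
  - apply Hge, (Rmult_lt_reg_r (INR M)); [lra|].
    replace ((z + INR m / INR M) * INR M) with (z * INR M + INR m) by (field; lra); lra.
Qed.

Lemma count_lt_grid z M t : (0 < M)%nat -> 0 < z <= 1 / INR M -> 0 <= t <= 1 ->
  Rabs (INR (count_lt t (grid z M)) - INR M * t) <= 1.
Proof.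
  intros HM [Hz0 Hz1] Ht.
  assert (HMR : 0 < INR M) by (apply lt_0_INR; lia).
  assert (HzM : z * INR M <= 1).
  { apply (Rmult_le_compat_r (INR M)) in Hz1; [|lra].
    now replace (1 / INR M * INR M) with 1 in Hz1 by (field; lra). }
  assert (HzM0 : 0 < z * INR M) by nra.
  assert (HtM : 0 <= INR M * t <= INR M) by nra.
  rewrite count_lt_grid_eq by exact HM.
  replace ((t - z) * INR M) with (INR M * t - z * INR M) by ring.
  remember (count_lt (INR M * t - z * INR M) (map INR (seq 0 M))) as c eqn:Hc.
  destruct (count_lt_INR_seq _ M c Hc) as [H1 H2].
  assert (Hc1 : INR M * t - 1 <= INR c) by (destruct H1 as [E|H1]; [rewrite E|]; lra).
  assert (Hc2 : INR c <= INR M * t + 1)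
    by (destruct H2 as [E|H2]; [rewrite E; cbn [INR]|]; lra).
  apply Rabs_le; lra.
Qed.

Definition discrepancy (b : nat -> R) (j n : nat) (t : R) : R :=
  INR (count_below b j n t) - INR n * t.

Lemma count_below_add b j n m t :
  count_below b j (n + m) t = (count_below b j n t + count_below b (j + n) m t)%nat.
Proof.
  rewrite !count_below_map, seq_app, map_app; unfold count_lt.
  now rewrite filter_app, length_app.
Qed.

Lemma discrepancy_add b j n m t :
  discrepancy b j (n + m) t = discrepancy b j n t + discrepancy b (j + n) m t.
Proof. unfold discrepancy; rewrite count_below_add, !plus_INR; ring. Qed.

Lemma count_below_le b j n t : (count_below b j n t <= n)%nat.
Proof. induction n as [|n IH]; cbn; [lia|]; destruct Rlt_dec; lia. Qed.

Lemma discrepancy_le_length b j n t : 0 <= t <= 1 -> Rabs (discrepancy b j n t) <= INR n.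
Proof.
  intros Ht; unfold discrepancy.
  pose proof (le_INR _ _ (count_below_le b j n t)); pose proof (pos_INR (count_below b j n t)).
  pose proof (pos_INR n); apply Rabs_le; split; nra.
Qed.

Lemma discrepancy_of_block_bound b M t : (0 < M)%nat -> 0 <= t <= 1 ->
  (forall q, Rabs (discrepancy b (M * q) M t) <= 1) ->
  forall j n, Rabs (discrepancy b j n t) <= INR n / INR M + 2 * INR M.
Proof.
  intros HM Ht Hblock.
  assert (HMR : 0 < INR M) by (apply lt_0_INR; lia).
  assert (Haligned : forall q r, Rabs (discrepancy b (M * q) (r * M) t) <= INR r).
  { intros q r; induction r as [|r IH].
    - unfold discrepancy; cbn; rewrite Rmult_0_l, Rminus_0_r, Rabs_R0; lra.
    - replace (S r * M)%nat with (r * M + M)%nat by lia.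
      rewrite discrepancy_add, S_INR.
      replace (M * q + r * M)%nat with (M * (q + r))%nat by lia.
      pose proof (Hblock (q + r)%nat).
      eapply Rle_trans; [apply Rabs_triang | lra]. }
  (* Cut the window into a head ending at a block boundary, r full blocks and a tail. *)
  intros j n.
  assert (Hn : 0 <= INR n / INR M)
    by (unfold Rdiv; apply Rmult_le_pos; [apply pos_INR | left; apply Rinv_0_lt_compat; lra]).
  pose proof (Nat.div_mod_eq j M) as Hj.
  pose proof (Nat.mod_upper_bound j M ltac:(lia)) as Hs0.
  set (q0 := (j / M)%nat) in *; set (s0 := (j mod M)%nat) in *.
  destruct (le_lt_dec n (M - s0)) as [Hshort|Hlong].
  { pose proof (discrepancy_le_length b j n t Ht); pose proof (le_INR _ _ Hshort).
    pose proof (le_INR _ _ (Nat.le_sub_l M s0)); lra. }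
  set (r := ((n - (M - s0)) / M)%nat); set (s := ((n - (M - s0)) mod M)%nat).
  pose proof (Nat.div_mod_eq (n - (M - s0)) M) as Hrs.
  pose proof (Nat.mod_upper_bound (n - (M - s0)) M ltac:(lia)) as Hs.
  fold r s in Hrs, Hs.
  replace n with (M - s0 + r * M + s)%nat by lia.
  rewrite !discrepancy_add.
  replace (j + (M - s0))%nat with (M * (q0 + 1))%nat by lia.
  replace (j + (M - s0 + r * M))%nat with (M * (q0 + 1) + r * M)%nat by lia.
  pose proof (discrepancy_le_length b j (M - s0) t Ht).
  pose proof (Haligned (q0 + 1)%nat r).
  pose proof (discrepancy_le_length b (M * (q0 + 1) + r * M) s t Ht).
  assert (Hr : INR r <= INR (M - s0 + r * M + s) / INR M).
  { apply (Rmult_le_reg_r (INR M)); [lra|].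
    replace (INR (M - s0 + r * M + s) / INR M * INR M) with (INR (M - s0 + r * M + s))
      by (field; lra).
    rewrite <- mult_INR; apply le_INR; lia. }
  pose proof (le_INR _ _ (Nat.le_sub_l M s0)); pose proof (le_INR _ _ (Nat.lt_le_incl _ _ Hs)).
  eapply Rle_trans; [apply Rabs_triang|].
  eapply Rle_trans; [apply Rplus_le_compat_r, Rabs_triang|]; lra.
Qed.

Lemma a_tm_discrepancy_block k q t : 0 <= t <= 1 ->
  Rabs (discrepancy a_tm (2 ^ S k * q) (2 ^ S k) t) <= 1.
Proof.
  intros Ht; destruct (a_tm_block_grid k q) as [z [Hz Hperm]].
  unfold discrepancy; rewrite count_below_map, (Permutation_count_lt _ _ _ Hperm).
  apply count_lt_grid; auto; apply Nat.neq_0_lt_0, Nat.pow_nonzero; lia.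
Qed.

Lemma a_tm_discrepancy_sublinear eps : 0 < eps -> exists C,
  forall j n t, 0 <= t <= 1 -> Rabs (discrepancy a_tm j n t) <= eps * INR n + C.
Proof.
  intros Heps; destruct (INR_unbounded (1 / eps)) as [k Hk].
  set (M := (2 ^ S k)%nat).
  assert (HkM : (S k < M)%nat) by (apply Nat.pow_gt_lin_r; lia).
  assert (HkMR : INR k < INR M) by (apply lt_INR; lia).
  exists (2 * INR M); intros j n t Ht.
  eapply Rle_trans; [apply (discrepancy_of_block_bound a_tm M t); [lia | exact Ht |
    intros; apply a_tm_discrepancy_block, Ht]|].
  assert (HepsM : 1 < eps * INR M).
  { replace 1 with (eps * (1 / eps)) by (field; lra); apply Rmult_lt_compat_l; lra. }
  pose proof (pos_INR k); apply Rplus_le_compat_r, (Rmult_le_reg_r (INR M)); [lra|].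
  replace (INR n / INR M * INR M) with (INR n) by (field; lra).
  pose proof (pos_INR n); nra.
Qed.

Lemma canonical_of_discrepancy b : pairwise_distinct b -> (forall i, 0 <= b i <= 1) ->
  (forall eps, 0 < eps -> exists C, forall j n t, 0 <= t <= 1 ->
     Rabs (discrepancy b j n t) <= eps * INR n + C) ->
  canonical b.
Proof.
  intros Hdist Hrange Hdisc; split; [exact Hdist | split; [exact Hrange|]].
  intros t Ht eps Heps.
  destruct (Hdisc (eps / 2) ltac:(lra)) as [C HC].
  destruct (INR_unbounded (2 * C / eps)) as [N HN].
  exists N; intros n j HNn Hn.
  assert (HnR : 0 < INR n) by (apply lt_0_INR; lia).
  assert (HC' : C < eps / 2 * INR n).
  { apply le_INR in HNn.
    assert (E : 2 * C / eps * eps = 2 * C) by (field; lra); nra. }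
  specialize (HC j n t Ht).
  replace (INR (count_below b j n t) / INR n - t) with (discrepancy b j n t / INR n)
    by (unfold discrepancy; field; lra).
  unfold Rdiv; rewrite Rabs_mult, Rabs_inv, (Rabs_pos_eq (INR n)) by lra.
  apply (Rmult_lt_reg_r (INR n)); [lra|].
  replace (Rabs (discrepancy b j n t) * / INR n * INR n) with (Rabs (discrepancy b j n t))
    by (field; lra); lra.
Qed.

Lemma count_below_zero_a_tm_succ j n t :
  count_below zero_a_tm (S j) n t = count_below a_tm j n t.
Proof. induction n as [|n IH]; [reflexivity|]; cbn [count_below]; now rewrite IH. Qed.

Lemma zero_a_tm_discrepancy_sublinear eps : 0 < eps -> exists C,
  forall j n t, 0 <= t <= 1 -> Rabs (discrepancy zero_a_tm j n t) <= eps * INR n + C.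
Proof.
  intros Heps; destruct (a_tm_discrepancy_sublinear eps Heps) as [C HC].
  exists (C + 1); intros [|j] n t Ht.
  - destruct n as [|n].
    + pose proof (HC 0%nat 0%nat t Ht) as H0; unfold discrepancy in *; cbn [count_below INR] in *.
      lra.
    + replace (S n) with (1 + n)%nat by reflexivity; rewrite discrepancy_add.
      pose proof (discrepancy_le_length zero_a_tm 0 1 t Ht).
      pose proof (HC 0%nat n t Ht); pose proof (pos_INR n).
      unfold discrepancy at 2; cbn [Nat.add]; rewrite count_below_zero_a_tm_succ.
      fold (discrepancy a_tm 0 n t); rewrite S_INR; cbn [INR] in *.
      eapply Rle_trans; [apply Rabs_triang | lra].
  - unfold discrepancy; rewrite count_below_zero_a_tm_succ; fold (discrepancy a_tm j n t).
    pose proof (HC j n t Ht); lra.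
Qed.

Lemma zero_a_tm_canonical : canonical zero_a_tm.
Proof.
  apply canonical_of_discrepancy;
    [exact zero_a_tm_pairwise_distinct | | exact zero_a_tm_discrepancy_sublinear].
  intros [|i]; cbn; [lra|]; pose proof (a_tm_bounds i); lra.
Qed.

Lemma a_tm_one : a_tm 1 = 1.
Proof.
  change 1%nat with (2 * 0 + 1)%nat; rewrite a_tm_succ_double; unfold tm_snd; cbn.
  destruct Rle_dec; lra.
Qed.

Lemma count_below_all b j n t :
  (forall k, (k < n)%nat -> b (j + k)%nat < t) -> count_below b j n t = n.
Proof.
  induction n as [|n IH]; intros Hall; [reflexivity|]; cbn [count_below].
  rewrite IH by (intros; apply Hall; lia).
  destruct Rlt_dec as [_|Hge]; [lia | exfalso; apply Hge, Hall; lia].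
Qed.

Lemma word_2utm_not_ergodic : ~ ergodic_valid word_2utm.
Proof.
  intros [b [[_ Hiso] [_ [Hrange Hfreq]]]].
  assert (Hb0 : forall k, b (S k) < b 0%nat).
  { intros k; apply Hiso, lex_lt_head; cbn; pose proof (u_tm_le1 (k + 0)); lia. }
  assert (Hb2 : forall k, (2 <= k)%nat -> b (S k) < b 2%nat).
  { intros k Hk; apply Hiso; change (lex_lt (shift k u_tm) (shift 1 u_tm)).
    apply a_tm_lt_iff_lex; rewrite a_tm_one.
    destruct (proj2 (proj1 (a_tm_bounds k))) as [Hlt|Heq]; [exact Hlt|].
    rewrite <- a_tm_one in Heq; apply a_tm_injective in Heq; lia. }
  pose proof (Hb0 1%nat); pose proof (Hrange 0%nat); pose proof (Hrange 2%nat).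
  set (t := (b 2%nat + 1) / 2).
  destruct (Hfreq t ltac:(unfold t; lra) ((1 - b 2%nat) / 2) ltac:(lra)) as [N HN].
  specialize (HN (S N) 3%nat ltac:(lia) ltac:(lia)).
  assert (Hall : count_below b 3 (S N) t = S N).
  { apply count_below_all; intros k _; replace (3 + k)%nat with (S (k + 2)) by lia.
    pose proof (Hb2 (k + 2)%nat ltac:(lia)); unfold t; lra. }
  rewrite Hall, Rdiv_diag, Rabs_pos_eq in HN by (unfold t; lra || (apply not_0_INR; lia)).
  unfold t in HN; lra.
Qed.

Theorem mainTheorem8 :
  (ergodic_valid word_0u' /\ represents_valid word_0u' zero_a_tm /\ canonical zero_a_tm)
  /\ ~ ergodic_valid word_2utm.
Proof.
  split; [|exact word_2utm_not_ergodic].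
  pose proof zero_a_tm_represents; pose proof zero_a_tm_canonical.
  split; [exists zero_a_tm|]; tauto.
Qed.
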